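(* Let $a,b,c,d>0$, $\theta>0$ satisfy $-(\theta a+\theta^2 b)<(\theta-1)(\theta+1)^2<\theta c+\theta^2 d$, and consider on $\mathcal{I}=[0,1]^2$ the system $$\dot x=x(1-x)\big[xr(-c+d-a+b)+x(a-b)-r(d+b)+b\big]+\mu(1-2x),\qquad \dot r=r(1-r)\big[\theta x-(1-x)\big].$$ Then for every $\mu\in(0,1]$ the boundary $\partial\mathcal{I}$ is repelling.
   Context: The boundary $\partial\mathcal{I}$ is the union of the four sides $\mathcal{B}_t=\{r=1\}$, $\mathcal{B}_b=\{r=0\}$, $\mathcal{B}_l=\{x=0\}$, $\mathcal{B}_r=\{x=1\}$ of the square. The boundary is called repelling if there is $\delta>0$ such that every solution $(x(t),r(t))$ with initial condition in the open square $(0,1)^2$ satisfies $\liminf_{t\to\infty}\operatorname{dist}((x(t),r(t)),\partial\mathcal{I})>\delta$, i.e. trajectories starting in the interior eventually stay a uniform positive distance away from the boundary. *)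

From Stdlib Require Import Reals.
From Coquelicot Require Import Coquelicot.
Open Scope R_scope.

Definition in_boundary (p : R * R) : Prop :=
  0 <= fst p <= 1 /\ 0 <= snd p <= 1 /\
  (fst p = 0 \/ fst p = 1 \/ snd p = 0 \/ snd p = 1).

Definition dist_boundary (p : R * R) : R :=
  real (Glb_Rbar (fun d => exists q, in_boundary q /\
          d = sqrt ((fst p - fst q) ^ 2 + (snd p - snd q) ^ 2))).

Definition fx (a b c d mu x r : R) : R :=
  x * (1 - x) * (x * r * (- c + d - a + b) + x * (a - b) - r * (d + b) + b)
  + mu * (1 - 2 * x).
Definition fr (theta x r : R) : R :=
  r * (1 - r) * (theta * x - (1 - x)).

Definition is_solution (a b c d theta mu : R) (x r : R -> R) : Prop :=
  (forall t, 0 <= t -> continuity_pt x t /\ continuity_pt r t) /\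
  (forall t, 0 < t ->
     derivable_pt_lim x t (fx a b c d mu (x t) (r t)) /\
     derivable_pt_lim r t (fr theta (x t) (r t))).

(* The boundary is repelling: there is delta > 0 such that every solution
   starting in the open square satisfies
   liminf_{t -> oo} dist((x t, r t), boundary) > delta.
   "liminf > delta" is written out literally: for some eps > 0 the
   distance is eventually >= delta + eps. *)
Definition boundary_repelling (a b c d theta mu : R) : Prop :=
  exists delta, 0 < delta /\
    forall x r : R -> R,
      is_solution a b c d theta mu x r ->
      0 < x 0 < 1 -> 0 < r 0 < 1 ->
      exists eps, 0 < eps /\ exists T, forall t, T <= t ->
        delta + eps <= dist_boundary (x t, r t).

From Stdlib Require Import Reals Lra Psatz Classical.
From Coquelicot Require Import Coquelicot.
Open Scope R_scope.

(* Solutions starting inside stay inside: each coordinate solves a linear equation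
   y' = k y + m with m >= 0.  Near x = 0 and x = 1 the mutation term mu (1 - 2x) dominates,
   so x eventually keeps a fixed distance from those sides.  Near r = 0 one has
   r'/r ~ (theta + 1) (x - z) with z = 1/(theta + 1), and x' ~ edge_field a b mu x, which the
   hypothesis on theta makes positive on some [0, x1] with x1 > z.  Hence
   V = ln r - lam/2 max(0, x1 - x)^2 increases at a uniform rate whenever r is small: left of x1
   the barrier term makes up for the decay of ln r.  So V, and with it r, is eventually bounded
   below by a constant depending only on the parameters.  The side r = 1 is the same argument
   for (1 - x, 1 - r), which solves the system with (a, b, c, d) replaced by (d, c, b, a) and z
   by 1 - z. *)

Lemma continuity_pt_ball (f : R -> R) (s eps : R) : continuity_pt f s -> 0 < eps ->
  exists del, 0 < del /\ forall u, Rabs (u - s) < del -> Rabs (f u - f s) < eps.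
Proof.
  intros hf he.
  destruct (proj1 (continuity_pt_locally f s) hf (mkposreal eps he)) as [del hdel].
  exists del; split; [apply cond_pos | intros u hu; apply hdel, hu].
Qed.

Lemma mvt_interior (f df : R -> R) (a b : R) : a < b ->
  (forall t, a <= t <= b -> continuity_pt f t) ->
  (forall t, a < t < b -> derivable_pt_lim f t (df t)) ->
  exists c, a < c < b /\ f b - f a = df c * (b - a).
Proof.
  intros hab hc hd.
  assert (hf : forall c, a < c < b -> derivable_pt f c)
    by (intros c hc'; exists (df c); exact (hd c hc')).
  assert (hid : forall c, a < c < b -> derivable_pt id c) by (intros; apply derivable_pt_id).
  destruct (MVT f id a b hf hid hab hc
     (fun c _ => derivable_continuous_pt _ _ (derivable_pt_id c))) as (c & hcab & E).
  exists c; split; [exact hcab|].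
  rewrite (derive_pt_eq_0 f c (df c) (hf c hcab) (hd c hcab)),
    (derive_pt_eq_0 id c 1 (hid c hcab) (derivable_pt_lim_id c)) in E.
  unfold id in E; lra.
Qed.

Lemma last_time_above (y : R -> R) (a b L : R) : a <= b ->
  (forall t, a <= t <= b -> continuity_pt y t) -> L <= y a ->
  exists s, a <= s <= b /\ L <= y s /\ forall u, s < u <= b -> y u < L.
Proof.
  intros hab hy ha.
  set (E := fun u => a <= u <= b /\ L <= y u).
  destruct (completeness E) as [s [hub hlub]].
  { exists b; intros u hu; apply hu. }
  { exists a; split; [lra | exact ha]. }
  assert (has : a <= s) by (apply hub; split; [lra | exact ha]).
  assert (hsb : s <= b) by (apply hlub; intros u hu; apply hu).
  assert (hafter : forall u, s < u <= b -> y u < L).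
  { intros u hu; destruct (Rlt_or_le (y u) L) as [?|hge]; [assumption|].
    assert (u <= s) by (apply hub; split; lra); lra. }
  exists s; split; [lra | split; [|exact hafter]].
  destruct (Rle_or_lt L (y s)) as [?|hlt]; [assumption | exfalso].
  destruct (continuity_pt_ball y s (L - y s) (hy s ltac:(lra)) ltac:(lra))
    as (del & hdel & hnear).
  (* [s - del/2] would be a smaller upper bound of [E] *)
  assert (s <= s - del / 2); [|lra].
  apply hlub; intros u [hu hLu].
  destruct (Rle_or_lt u (s - del / 2)) as [?|hgt]; [assumption | exfalso].
  assert (u <= s) by (apply hub; split; assumption).
  pose proof (hnear u ltac:(apply Rabs_lt_between'; lra)) as hyu.
  apply Rabs_lt_between' in hyu; lra.
Qed.

Lemma stays_above (y dy : R -> R) (a b L : R) : a <= b ->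
  (forall t, a <= t <= b -> continuity_pt y t) ->
  (forall t, a < t < b -> derivable_pt_lim y t (dy t)) ->
  (forall t, a < t < b -> y t < L -> 0 < dy t) ->
  L <= y a -> L <= y b.
Proof.
  intros hab hc hd hpos ha.
  destruct (last_time_above y a b L hab hc ha) as (s & hs & hys & hafter).
  destruct (Rle_lt_or_eq_dec s b (proj2 hs)) as [hsb | <-]; [|exact hys].
  destruct (mvt_interior y dy s b hsb) as (c & hcsb & hmvt).
  { intros t ht; apply hc; lra. }
  { intros t ht; apply hd; lra. }
  assert (0 < dy c * (b - s)) by (apply Rmult_lt_0_compat; [apply hpos, hafter|]; lra).
  pose proof (hafter b ltac:(lra)); lra.
Qed.

Lemma eventually_above (y dy : R -> R) (L eta : R) : 0 < eta ->
  (forall t, 0 <= t -> continuity_pt y t) ->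
  (forall t, 0 < t -> derivable_pt_lim y t (dy t)) ->
  (forall t, 0 < t -> y t <= L -> eta <= dy t) ->
  exists T, forall t, T <= t -> L <= y t.
Proof.
  intros he hc hd hdy.
  exists (Rmax 0 ((L - y 0) / eta)); intros t ht.
  assert (ht0 : 0 <= t) by (eapply Rle_trans; [apply Rmax_l | exact ht]).
  assert (hreach : L - y 0 <= eta * t).
  { rewrite Rmult_comm; apply Rle_div_l; [lra|].
    eapply Rle_trans; [apply Rmax_r | exact ht]. }
  destruct (classic (exists u, 0 <= u <= t /\ L <= y u)) as [(u & hu & hLu) | hbelow].
  - apply (stays_above y dy u t L); try intros s hs; try lra.
    + apply hc; lra.
    + apply hd; lra.
    + intros hlt; pose proof (hdy s ltac:(lra) ltac:(lra)); lra.
  - destruct (Rle_lt_or_eq_dec 0 t ht0) as [htpos | <-]; [|lra].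
    destruct (mvt_interior y dy 0 t htpos) as (c & hct & hmvt).
    { intros s hs; apply hc; lra. }
    { intros s hs; apply hd; lra. }
    destruct (Rle_or_lt L (y c)) as [hLc | hcL].
    { exfalso; apply hbelow; exists c; split; [lra | exact hLc]. }
    pose proof (hdy c ltac:(lra) ltac:(lra)).
    assert (eta * t <= dy c * t) by (apply Rmult_le_compat_r; lra).
    lra.
Qed.

Lemma first_time_nonpositive (y : R -> R) (t : R) : 0 <= t ->
  (forall u, 0 <= u <= t -> continuity_pt y u) -> 0 < y 0 -> y t <= 0 ->
  exists s, 0 < s <= t /\ y s <= 0 /\ forall u, 0 <= u < s -> 0 < y u.
Proof.
  intros ht hc h0 ht0.
  (* reversing time turns the first zero into the last time [- y (- u)] is above [0] *)
  set (v := fun u => - y (- u)).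
  destruct (last_time_above v (- t) 0 0) as (s & hs & hvs & hafter).
  - lra.
  - intros u hu; unfold v.
    apply continuity_pt_opp, (continuity_pt_comp Ropp y).
    + apply continuity_pt_opp, continuity_pt_id.
    + apply hc; lra.
  - unfold v; rewrite Ropp_involutive; lra.
  - unfold v in hvs, hafter.
    assert (hs0 : s <> 0) by (intros ->; rewrite Ropp_0 in hvs; lra).
    exists (- s); repeat split; try lra.
    intros u hu; specialize (hafter (- u) ltac:(lra)); rewrite Ropp_involutive in hafter; lra.
Qed.

Lemma linear_ode_pos (y k m : R -> R) :
  (forall t, 0 <= t -> continuity_pt y t /\ continuity_pt k t) ->
  (forall t, 0 < t -> derivable_pt_lim y t (y t * k t + m t)) ->
  (forall t, 0 < t -> 0 <= m t) ->
  0 < y 0 -> forall t, 0 <= t -> 0 < y t.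
Proof.
  intros hc hd hm h0 t ht.
  destruct (Rlt_or_le 0 (y t)) as [?|hneg]; [assumption | exfalso].
  destruct (first_time_nonpositive y t ht (fun u hu => proj1 (hc u ltac:(lra))) h0 hneg)
    as (s & hs & hys & hbefore).
  destruct (continuity_ab_min k 0 s ltac:(lra) (fun u hu => proj2 (hc u ltac:(lra))))
    as (umin & hkmin & humin).
  (* integrating factor: [y u * exp (B u)] is nondecreasing while [y] stays positive *)
  set (B := - k umin).
  set (dz := fun u => exp (B * u) * (y u * (k u + B) + m u)).
  destruct (mvt_interior (fun u => y u * exp (B * u)) dz 0 s ltac:(lra)) as (c & hc0 & hmvt).
  - intros u hu; pose proof (proj1 (hc u ltac:(lra))); reg.
  - intros u hu.
    assert (hexp : derivable_pt_lim (fun v => exp (B * v)) u (B * exp (B * u))).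
    { apply is_derive_Reals; auto_derive; [exact I | ring]. }
    pose proof (derivable_pt_lim_mult y _ u _ _ (hd u ltac:(lra)) hexp) as hz.
    unfold dz; replace (exp (B * u) * (y u * (k u + B) + m u))
      with ((y u * k u + m u) * exp (B * u) + y u * (B * exp (B * u))) by ring.
    exact hz.
  - assert (0 <= y c * (k c + B)).
    { apply Rmult_le_pos; [apply Rlt_le, hbefore; lra|].
      pose proof (hkmin c ltac:(lra)); unfold B; lra. }
    assert (0 <= dz c * (s - 0)).
    { apply Rmult_le_pos; [|lra].
      apply Rmult_le_pos; [apply Rlt_le, exp_pos | pose proof (hm c ltac:(lra)); lra]. }
    rewrite Rmult_0_r, exp_0 in hmvt.
    assert (y s * exp (B * s) <= 0)
      by (apply Rmult_le_0_r; [exact hys | apply Rlt_le, exp_pos]).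
    lra.
Qed.

Lemma derivable_pt_lim_of_quadratic_remainder (f : R -> R) (x l K : R) :
  (forall h, Rabs (f (x + h) - f x - l * h) <= K * h ^ 2) -> derivable_pt_lim f x l.
Proof.
  intros hf eps he.
  assert (hK : 0 < eps / (Rabs K + 1))
    by (apply Rdiv_lt_0_compat; [|pose proof (Rabs_pos K)]; lra).
  exists (mkposreal _ hK); intros h hh0 hh; simpl in hh.
  apply Rlt_div_r in hh; [|pose proof (Rabs_pos K); lra].
  replace ((f (x + h) - f x) / h - l) with ((f (x + h) - f x - l * h) / h) by (field; exact hh0).
  assert (ha : 0 < Rabs h) by (apply Rabs_pos_lt, hh0).
  unfold Rdiv; rewrite Rabs_mult, Rabs_inv.
  apply (Rmult_lt_reg_r (Rabs h)); [exact ha|].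
  rewrite Rmult_assoc, Rinv_l, Rmult_1_r by lra.
  pose proof (hf h) as hr.
  assert (hsq : h ^ 2 = Rabs h * Rabs h) by (rewrite <- Rabs_mult, Rabs_pos_eq; nra).
  assert (hK' : K * h ^ 2 <= Rabs K * h ^ 2)
    by (apply Rmult_le_compat_r; [nra | apply Rle_abs]).
  rewrite hsq in hK', hr.
  assert (Rabs h * (Rabs h * (Rabs K + 1)) < Rabs h * eps) by (apply Rmult_lt_compat_l; lra).
  assert (0 < Rabs h * Rabs h) by nra.
  lra.
Qed.

Lemma pos_part_sq_remainder (y h : R) :
  Rabs (Rmax 0 (y + h) ^ 2 - Rmax 0 y ^ 2 - 2 * Rmax 0 y * h) <= h ^ 2.
Proof. unfold Rmax; destruct (Rle_dec 0 (y + h)), (Rle_dec 0 y); apply Rabs_le; nra. Qed.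

Lemma derivable_pt_lim_barrier (lam x1 x : R) :
  derivable_pt_lim (fun u => - (lam / 2) * Rmax 0 (x1 - u) ^ 2) x (lam * Rmax 0 (x1 - x)).
Proof.
  apply (derivable_pt_lim_of_quadratic_remainder _ _ _ (Rabs lam / 2)); intros h; cbv beta.
  replace (x1 - (x + h)) with (x1 - x + - h) by ring.
  pose proof (pos_part_sq_remainder (x1 - x) (- h)) as hr.
  replace (- (lam / 2) * Rmax 0 (x1 - x + - h) ^ 2 - - (lam / 2) * Rmax 0 (x1 - x) ^ 2
           - lam * Rmax 0 (x1 - x) * h)
    with (- (lam / 2) * (Rmax 0 (x1 - x + - h) ^ 2 - Rmax 0 (x1 - x) ^ 2
                         - 2 * Rmax 0 (x1 - x) * - h)) by field.
  rewrite Rabs_mult, Rabs_Ropp, Rabs_div, (Rabs_pos_eq 2) by lra.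
  replace ((- h) ^ 2) with (h ^ 2) in hr by ring.
  pose proof (Rabs_pos lam); nra.
Qed.

Lemma log_lyapunov_eventually_ge (X rho : R -> R) (f A : R -> R -> R)
    (phi dphi : R -> R) (M eta s : R) :
  0 < eta -> 0 < s ->
  (forall x, 0 < x < 1 -> derivable_pt_lim phi x (dphi x)) ->
  (forall x, 0 < x < 1 -> - M <= phi x <= 0) ->
  (forall t, 0 <= t -> continuity_pt X t /\ continuity_pt rho t) ->
  (forall t, 0 < t -> derivable_pt_lim X t (f (X t) (rho t)) /\
                      derivable_pt_lim rho t (rho t * A (X t) (rho t))) ->
  (forall t, 0 <= t -> 0 < X t < 1 /\ 0 < rho t < 1) ->
  (forall x p, 0 < x < 1 -> 0 < p < 1 -> p <= s -> eta <= A x p + dphi x * f x p) ->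
  exists T, forall t, T <= t -> s * exp (- M) <= rho t.
Proof.
  intros heta hs hphi hphiM hc hd hin hdecay.
  set (V := fun t => ln (rho t) + phi (X t)).
  destruct (eventually_above V (fun t => A (X t) (rho t) + dphi (X t) * f (X t) (rho t))
              (ln s - M) eta heta) as [T hT].
  - intros t ht; destruct (hc t ht) as [hX hrho], (hin t ht) as [hXt hrhot].
    apply continuity_pt_plus.
    + apply (continuity_pt_comp rho ln); [exact hrho|].
      apply derivable_continuous_pt; exists (/ rho t); apply derivable_pt_lim_ln; lra.
    + apply (continuity_pt_comp X phi); [exact hX|].
      apply derivable_continuous_pt; exists (dphi (X t)); apply hphi; lra.
  - intros t ht; destruct (hd t ht) as [hX hrho], (hin t ltac:(lra)) as [hXt hrhot].
    pose proof (derivable_pt_lim_comp rho ln t _ _ hrho (derivable_pt_lim_ln _ (proj1 hrhot)))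
      as hlog.
    pose proof (derivable_pt_lim_comp X phi t _ _ hX (hphi _ hXt)) as hbar.
    replace (A (X t) (rho t) + dphi (X t) * f (X t) (rho t))
      with (/ rho t * (rho t * A (X t) (rho t)) + dphi (X t) * f (X t) (rho t))
      by (field; lra).
    exact (derivable_pt_lim_plus _ _ t _ _ hlog hbar).
  - intros t ht hV; destruct (hin t ltac:(lra)) as [hXt hrhot].
    apply hdecay; [exact hXt | exact hrhot |].
    destruct (Rle_or_lt (rho t) s) as [?|hgt]; [assumption | exfalso].
    apply ln_increasing in hgt; [|exact hs].
    pose proof (hphiM _ hXt); unfold V in hV; lra.
  - exists (Rmax T 0); intros t ht.
    destruct (hin t ltac:(pose proof (Rmax_r T 0); lra)) as [hXt hrhot].
    pose proof (hT t ltac:(pose proof (Rmax_l T 0); lra)) as hVt.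
    pose proof (hphiM _ hXt); unfold V in hVt.
    rewrite <- (exp_ln (rho t)), <- (exp_ln s), <- exp_plus by lra.
    assert (hle : ln s + - M <= ln (rho t)) by lra.
    destruct (Rle_lt_or_eq_dec _ _ hle) as [hlt | ->];
      [left; apply exp_increasing, hlt | right; reflexivity].
Qed.

Lemma barrier_estimate (g : R -> R) (k z x1 gm C : R) :
  0 < k -> 0 <= z < x1 -> x1 <= 1 -> 0 < gm -> 0 <= C ->
  (forall x, 0 <= x <= x1 -> gm <= g x) ->
  exists lam eta s, 0 <= lam /\ 0 < eta /\ 0 < s /\
    forall x p v, 0 <= x <= 1 -> 0 <= p <= s -> g x - p * C <= v ->
      eta <= (1 - p) * (k * (x - z)) + lam * Rmax 0 (x1 - x) * v.
Proof.
  intros hk hz hx1 hgm hC hg.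
  set (lam := (k * z + 1) / (x1 * gm)).
  assert (hlam : 0 < lam) by (apply Rdiv_lt_0_compat; nra).
  set (eta := Rmin 1 (k * (x1 - z)) / 2).
  assert (heta : 0 < eta) by (apply Rdiv_lt_0_compat; [apply Rmin_glb_lt; nra | lra]).
  exists lam, eta, (eta / (k + lam * C)).
  split; [lra | split; [exact heta | split; [apply Rdiv_lt_0_compat; nra|]]].
  intros x p v hx hp hv.
  assert (hm : 0 <= Rmax 0 (x1 - x) <= 1) by (split; [apply Rmax_l | apply Rmax_lub; lra]).
  (* the barrier term makes up for the decay [k (x - z) < 0] of the drift left of [x1] *)
  assert (hdrift : 2 * eta <= k * (x - z) + lam * Rmax 0 (x1 - x) * g x).
  { pose proof (Rmin_l 1 (k * (x1 - z))); pose proof (Rmin_r 1 (k * (x1 - z))).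
    unfold eta; destruct (Rle_or_lt x x1) as [hle | hgt].
    - rewrite Rmax_right by lra.
      assert (lam * (x1 - x) * gm <= lam * (x1 - x) * g x)
        by (apply Rmult_le_compat_l; [nra | apply hg; lra]).
      assert (lam * (x1 - x) * gm = (k * z + 1) * (1 - x / x1)) by (unfold lam; field; lra).
      assert (ht : 0 <= x / x1 <= 1).
      { split; [apply Rdiv_le_0_compat; lra | apply (Rdiv_le_1 x x1); lra]. }
      replace (k * (x - z)) with (k * (x / x1 * x1 - z)) by (field; lra).
      (* [k (x - z) + (k z + 1) (1 - x / x1)] is a convex combination of [k (x1 - z)] and [1] *)
      nra.
    - rewrite Rmax_left by lra; nra. }
  assert (p * (k + lam * C) <= eta).
  { apply Rle_div_r; [nra | apply hp]. }
  assert (lam * Rmax 0 (x1 - x) * (g x - p * C) <= lam * Rmax 0 (x1 - x) * v)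
    by (apply Rmult_le_compat_l; nra).
  assert (p * (k * (x - z)) <= p * k) by (apply Rmult_le_compat_l; nra).
  assert (lam * Rmax 0 (x1 - x) * (p * C) <= lam * 1 * (p * C))
    by (apply Rmult_le_compat_r; [nra | apply Rmult_le_compat_l; lra]).
  nra.
Qed.

Lemma dist_boundary_ge (p : R * R) (m : R) : 0 < m ->
  m <= fst p <= 1 - m -> m <= snd p <= 1 - m -> m <= dist_boundary p.
Proof.
  intros hm hx hr; unfold dist_boundary.
  set (S := fun d => exists q, in_boundary q /\
          d = sqrt ((fst p - fst q) ^ 2 + (snd p - snd q) ^ 2)).
  assert (hlow : forall d, S d -> m <= d).
  { intros d (q & (hq1 & hq2 & hside) & ->).
    rewrite <- (sqrt_pow2 m) by lra; apply sqrt_le_1_alt.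
    pose proof (pow2_ge_0 (fst p - fst q)); pose proof (pow2_ge_0 (snd p - snd q)).
    destruct hside as [e | [e | [e | e]]]; rewrite e; nra. }
  assert (hS : S (sqrt ((fst p - 0) ^ 2 + (snd p - 0) ^ 2))).
  { exists (0, 0); split; [unfold in_boundary; simpl; lra | reflexivity]. }
  destruct (Glb_Rbar_correct S) as [hlb hglb].
  specialize (hlb _ hS).
  assert (hm_le : Rbar_le m (Glb_Rbar S)) by (apply hglb; intros d hd; apply hlow, hd).
  destruct (Glb_Rbar S); simpl in *; tauto.
Qed.

(* The x-component of the field on the side r = 0, [fx a b c d mu x 0 = edge_field a b mu x]. *)
Definition edge_field (al be mu x : R) : R :=
  x * (1 - x) * (al * x + be * (1 - x)) + mu * (1 - 2 * x).

Lemma edge_field_reflect (al be mu x : R) :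
  edge_field al be mu (1 - x) = edge_field be al (- mu) x.
Proof. unfold edge_field; ring. Qed.

Lemma edge_field_at_inv_succ (al be mu theta : R) : 0 < theta ->
  edge_field al be mu (/ (theta + 1))
  = (theta * al + theta ^ 2 * be + mu * (theta - 1) * (theta + 1) ^ 2) / (theta + 1) ^ 3.
Proof. intros; unfold edge_field; field; lra. Qed.

Lemma edge_field_cross (al be mu x z : R) : 0 <= al -> 0 <= be ->
  1 / 2 < x <= z -> z < 1 ->
  (2 * x - 1) * edge_field al be mu z <= (2 * z - 1) * edge_field al be mu x.
Proof.
  intros hal hbe hx hz.
  (* [x^2 (1-x) / (2x-1)] and [x (1-x)^2 / (2x-1)] are nonincreasing on (1/2, 1) *)
  assert (h1 : z ^ 2 * (1 - z) * (2 * x - 1) <= x ^ 2 * (1 - x) * (2 * z - 1)).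
  { assert (0 <= (z - x) * (1 + (2 * x - 1) * (2 * z - 1) * (2 * x + 2 * z - 1)))
      by (apply Rmult_le_pos; [|assert (0 <= (2 * x - 1) * (2 * z - 1)) by nra]; nra).
    replace (x ^ 2 * (1 - x) * (2 * z - 1)) with (z ^ 2 * (1 - z) * (2 * x - 1)
      + (z - x) * (1 + (2 * x - 1) * (2 * z - 1) * (2 * x + 2 * z - 1)) / 4) by field.
    lra. }
  assert (h2 : z * (1 - z) ^ 2 * (2 * x - 1) <= x * (1 - x) ^ 2 * (2 * z - 1)).
  { assert (0 <= (z - x) * (x * (1 - x) * (2 * z - 1) + (1 - z) * (x * z + (1 - x) * (1 - z)))).
    { apply Rmult_le_pos; [lra|].
      assert (0 <= x * (1 - x)) by nra; assert (0 <= x * z + (1 - x) * (1 - z)) by nra.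
      apply Rplus_le_le_0_compat; apply Rmult_le_pos; lra. }
    replace (x * (1 - x) ^ 2 * (2 * z - 1)) with (z * (1 - z) ^ 2 * (2 * x - 1)
      + (z - x) * (x * (1 - x) * (2 * z - 1) + (1 - z) * (x * z + (1 - x) * (1 - z)))) by ring.
    lra. }
  unfold edge_field; nra.
Qed.

Lemma edge_field_pos_left (al be mu z x : R) : 0 < al -> 0 < be -> 0 < mu -> z < 1 ->
  0 < edge_field al be mu z -> 0 <= x <= z -> 0 < edge_field al be mu x.
Proof.
  intros hal hbe hmu hz hgz hx.
  destruct (Rle_or_lt x (1 / 2)) as [hle | hgt].
  - assert (0 <= x * (1 - x) * (al * x + be * (1 - x))) by (apply Rmult_le_pos; nra).
    destruct (Rlt_or_le x (1 / 2)) as [hlt | hge].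
    + assert (0 < mu * (1 - 2 * x)) by (apply Rmult_lt_0_compat; lra).
      unfold edge_field; lra.
    + replace x with (1 / 2) by lra; unfold edge_field; lra.
  - pose proof (edge_field_cross al be mu x z ltac:(lra) ltac:(lra) ltac:(lra) hz).
    nra.
Qed.

Lemma edge_field_pos_near (al be mu z : R) : 0 < al -> 0 < be -> 0 < mu -> 0 <= z < 1 ->
  0 < edge_field al be mu z ->
  exists x1 gm, z < x1 <= 1 /\ 0 < gm /\ forall x, 0 <= x <= x1 -> gm <= edge_field al be mu x.
Proof.
  intros hal hbe hmu hz hgz.
  assert (hcont : forall x, continuity_pt (edge_field al be mu) x)
    by (intros; unfold edge_field; reg).
  destruct (continuity_pt_ball _ z _ (hcont z) hgz) as (del & hdel & hnear).
  set (x1 := Rmin (z + del / 2) 1).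
  assert (hx1 : z < x1 <= 1) by (split; [apply Rmin_glb_lt | apply Rmin_r]; lra).
  assert (hpos : forall x, 0 <= x <= x1 -> 0 < edge_field al be mu x).
  { intros x hx; destruct (Rle_or_lt x z).
    - apply (edge_field_pos_left al be mu z); auto; lra.
    - assert (x1 <= z + del / 2) by apply Rmin_l.
      pose proof (hnear x ltac:(apply Rabs_lt_between'; lra)) as hxz.
      apply Rabs_lt_between' in hxz; lra. }
  destruct (continuity_ab_min (edge_field al be mu) 0 x1 ltac:(lra) (fun x _ => hcont x))
    as (xmin & hmin & hxmin).
  exists x1, (edge_field al be mu xmin); auto.
Qed.

Lemma fx_ge_edge_field (a b c d mu x r : R) : 0 < a -> 0 < b -> 0 < c -> 0 < d ->
  0 <= x <= 1 -> 0 <= r <= 1 ->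
  edge_field a b mu x - r * (a + b + c + d) <= fx a b c d mu x r.
Proof.
  intros ha hb hc hd hx hr.
  replace (fx a b c d mu x r) with
    (edge_field a b mu x - r * (x * (1 - x) * ((1 - x) * (d + b) + x * (c + a))))
    by (unfold fx, edge_field; ring).
  assert (0 <= x * (1 - x) <= 1) by nra.
  assert (0 <= (1 - x) * (d + b) + x * (c + a) <= a + b + c + d) by nra.
  assert (x * (1 - x) * ((1 - x) * (d + b) + x * (c + a)) <= a + b + c + d) by nra.
  nra.
Qed.

Lemma fx_ge_near_0 (a b c d mu x r : R) : 0 < a -> 0 < b -> 0 < c -> 0 < d -> mu <= 1 ->
  0 < x < 1 -> 2 * (a + b + c + d + 2) * x <= mu -> 0 <= r <= 1 ->
  mu / 2 <= fx a b c d mu x r.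
Proof.
  intros ha hb hc hd hmu hx hxmu hr.
  set (F := x * r * (- c + d - a + b) + x * (a - b) - r * (d + b) + b).
  assert (hF : - (a + b + c + d) <= F).
  { replace F with (x * a + (1 - x) * b - r * ((1 - x) * (d + b) + x * (c + a)))
      by (unfold F; ring).
    assert (0 <= (1 - x) * (d + b) + x * (c + a) <= a + b + c + d) by nra.
    nra. }
  assert (0 <= x * (1 - x) * (F + (a + b + c + d))) by (apply Rmult_le_pos; nra).
  assert (x * (1 - x) * (a + b + c + d) <= x * (a + b + c + d)) by nra.
  unfold fx; fold F; nra.
Qed.

(* The r-equation is written as r (1 - r) kappa (x - z) so that the family is closed under the
   reflection (x, r) |-> (1 - x, 1 - r). *)
Definition solves_system (a b c d mu kappa z : R) (x r : R -> R) : Prop :=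
  (forall t, 0 <= t -> continuity_pt x t /\ continuity_pt r t) /\
  (forall t, 0 < t ->
     derivable_pt_lim x t (fx a b c d mu (x t) (r t)) /\
     derivable_pt_lim r t (r t * (1 - r t) * (kappa * (x t - z)))).

Lemma is_solution_solves_system (a b c d theta mu : R) (x r : R -> R) : 0 < theta ->
  is_solution a b c d theta mu x r ->
  solves_system a b c d mu (theta + 1) (/ (theta + 1)) x r.
Proof.
  intros htheta [hc hd]; split; [exact hc|].
  intros t ht; destruct (hd t ht) as [hx hr]; split; [exact hx|].
  replace (r t * (1 - r t) * ((theta + 1) * (x t - / (theta + 1))))
    with (fr theta (x t) (r t)) by (unfold fr; field; lra).
  exact hr.
Qed.

Lemma derivable_pt_lim_one_minus (f : R -> R) (t l : R) :
  derivable_pt_lim f t l -> derivable_pt_lim (fun u => 1 - f u) t (- l).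
Proof.
  intros hf; replace (- l) with (0 - l) by ring.
  exact (derivable_pt_lim_minus _ _ t _ _ (derivable_pt_lim_const 1 t) hf).
Qed.

Lemma solves_system_reflect (a b c d mu kappa z : R) (x r : R -> R) :
  solves_system a b c d mu kappa z x r ->
  solves_system d c b a mu kappa (1 - z) (fun t => 1 - x t) (fun t => 1 - r t).
Proof.
  intros [hc hd]; split.
  - intros t ht; destruct (hc t ht); split; reg.
  - intros t ht; destruct (hd t ht) as [hx hr]; split.
    + replace (fx d c b a mu (1 - x t) (1 - r t)) with (- fx a b c d mu (x t) (r t))
        by (unfold fx; ring).
      exact (derivable_pt_lim_one_minus _ _ _ hx).
    + replace ((1 - r t) * (1 - (1 - r t)) * (kappa * (1 - x t - (1 - z))))
        with (- (r t * (1 - r t) * (kappa * (x t - z)))) by ring.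
      exact (derivable_pt_lim_one_minus _ _ _ hr).
Qed.

Lemma solves_system_pos (a b c d mu kappa z : R) (x r : R -> R) : 0 < mu ->
  solves_system a b c d mu kappa z x r -> 0 < x 0 -> 0 < r 0 ->
  forall t, 0 <= t -> 0 < x t /\ 0 < r t.
Proof.
  intros hmu [hc hd] hx0 hr0 t ht; split.
  - apply (linear_ode_pos x (fun u => (1 - x u) * (x u * r u * (- c + d - a + b)
             + x u * (a - b) - r u * (d + b) + b) - 2 * mu) (fun _ => mu)); auto.
    + intros u hu; destruct (hc u hu); split; [assumption | reg].
    + intros u hu; replace (x u * ((1 - x u) * (x u * r u * (- c + d - a + b)
             + x u * (a - b) - r u * (d + b) + b) - 2 * mu) + mu)
        with (fx a b c d mu (x u) (r u)) by (unfold fx; ring).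
      apply hd, hu.
    + intros; lra.
  - apply (linear_ode_pos r (fun u => (1 - r u) * (kappa * (x u - z))) (fun _ => 0)); auto.
    + intros u hu; destruct (hc u hu); split; [assumption | reg].
    + intros u hu; rewrite Rplus_0_r, <- Rmult_assoc; apply hd, hu.
    + intros; lra.
Qed.

Lemma solves_system_in_square (a b c d mu kappa z : R) (x r : R -> R) : 0 < mu ->
  solves_system a b c d mu kappa z x r -> 0 < x 0 < 1 -> 0 < r 0 < 1 ->
  forall t, 0 <= t -> 0 < x t < 1 /\ 0 < r t < 1.
Proof.
  intros hmu hsol hx0 hr0 t ht.
  destruct (solves_system_pos _ _ _ _ _ _ _ _ _ hmu hsol (proj1 hx0) (proj1 hr0) t ht).
  destruct (solves_system_pos _ _ _ _ _ _ _ _ _ hmu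
              (solves_system_reflect _ _ _ _ _ _ _ _ _ hsol) ltac:(lra) ltac:(lra) t ht).
  lra.
Qed.

Lemma x_eventually_ge (a b c d mu kappa z : R) (x r : R -> R) :
  0 < a -> 0 < b -> 0 < c -> 0 < d -> 0 < mu <= 1 ->
  solves_system a b c d mu kappa z x r ->
  (forall t, 0 <= t -> 0 < x t < 1 /\ 0 < r t < 1) ->
  exists T, forall t, T <= t -> mu / (2 * (a + b + c + d + 2)) <= x t.
Proof.
  intros ha hb hc hd hmu [hcont hder] hin.
  apply (eventually_above x (fun t => fx a b c d mu (x t) (r t)) _ (mu / 2)); [lra | | |].
  - intros t ht; apply hcont, ht.
  - intros t ht; apply hder, ht.
  - intros t ht hxt; destruct (hin t ltac:(lra)).
    apply fx_ge_near_0; try lra.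
    apply Rle_div_r in hxt; lra.
Qed.

Lemma r_eventually_ge (a b c d mu kappa z : R) :
  0 < a -> 0 < b -> 0 < c -> 0 < d -> 0 < mu <= 1 -> 0 < kappa -> 0 <= z < 1 ->
  0 < edge_field a b mu z ->
  exists m, 0 < m /\ forall x r : R -> R,
    solves_system a b c d mu kappa z x r ->
    (forall t, 0 <= t -> 0 < x t < 1 /\ 0 < r t < 1) ->
    exists T, forall t, T <= t -> m <= r t.
Proof.
  intros ha hb hc hd hmu hkappa hz hedge.
  destruct (edge_field_pos_near a b mu z ha hb ltac:(lra) hz hedge)
    as (x1 & gm & hx1 & hgm & hg).
  destruct (barrier_estimate (edge_field a b mu) kappa z x1 gm (a + b + c + d)
              hkappa ltac:(lra) (proj2 hx1) hgm ltac:(lra) hg)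
    as (lam & eta & s & hlam & heta & hs & hest).
  exists (s * exp (- (lam / 2))); split; [apply Rmult_lt_0_compat; [exact hs | apply exp_pos]|].
  intros x r [hcont hder] hin.
  apply (log_lyapunov_eventually_ge x r (fx a b c d mu)
           (fun x p => (1 - p) * (kappa * (x - z)))
           (fun u => - (lam / 2) * Rmax 0 (x1 - u) ^ 2) (fun u => lam * Rmax 0 (x1 - u))
           (lam / 2) eta s heta hs); auto.
  - intros u hu; apply derivable_pt_lim_barrier.
  - intros u hu.
    assert (0 <= Rmax 0 (x1 - u) <= 1) by (split; [apply Rmax_l | apply Rmax_lub; lra]).
    assert (0 <= Rmax 0 (x1 - u) ^ 2 <= 1) by (simpl; nra).
    nra.
  - intros t ht; rewrite <- Rmult_assoc; apply hder, ht.
  - intros u p hu hp hps; apply hest; try lra.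
    apply fx_ge_edge_field; lra.
Qed.

Lemma eventually_in_inner_square (a b c d mu kappa z : R) :
  0 < a -> 0 < b -> 0 < c -> 0 < d -> 0 < mu <= 1 -> 0 < kappa -> 0 < z < 1 ->
  0 < edge_field a b mu z -> 0 < edge_field d c mu (1 - z) ->
  exists m, 0 < m /\ forall x r : R -> R,
    solves_system a b c d mu kappa z x r -> 0 < x 0 < 1 -> 0 < r 0 < 1 ->
    exists T, forall t, T <= t -> m <= x t <= 1 - m /\ m <= r t <= 1 - m.
Proof.
  intros ha hb hc hd hmu hkappa hz hedge0 hedge1.
  destruct (r_eventually_ge a b c d mu kappa z) as (m0 & hm0 & hrm0); try lra.
  destruct (r_eventually_ge d c b a mu kappa (1 - z)) as (m1 & hm1 & hrm1); try lra.
  set (e := mu / (2 * (a + b + c + d + 2))).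
  assert (he : 0 < e) by (apply Rdiv_lt_0_compat; lra).
  exists (Rmin e (Rmin m0 m1)); split; [repeat apply Rmin_glb_lt; assumption|].
  intros x r hsol hx0 hr0.
  pose proof (solves_system_in_square _ _ _ _ _ _ _ _ _ (proj1 hmu) hsol hx0 hr0) as hin.
  pose proof (solves_system_reflect _ _ _ _ _ _ _ _ _ hsol) as hsol'.
  assert (hin' : forall t, 0 <= t -> 0 < 1 - x t < 1 /\ 0 < 1 - r t < 1)
    by (intros t ht; destruct (hin t ht); lra).
  destruct (x_eventually_ge _ _ _ _ _ _ _ _ _ ha hb hc hd hmu hsol hin) as [T1 hT1].
  destruct (x_eventually_ge _ _ _ _ _ _ _ _ _ hd hc hb ha hmu hsol' hin') as [T2 hT2].
  destruct (hrm0 x r hsol hin) as [T3 hT3].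
  destruct (hrm1 _ _ hsol' hin') as [T4 hT4].
  exists (Rmax (Rmax T1 T2) (Rmax T3 T4)); intros t ht.
  pose proof (Rmax_l T1 T2); pose proof (Rmax_r T1 T2); pose proof (Rmax_l T3 T4);
    pose proof (Rmax_r T3 T4); pose proof (Rmax_l (Rmax T1 T2) (Rmax T3 T4));
    pose proof (Rmax_r (Rmax T1 T2) (Rmax T3 T4)).
  specialize (hT1 t ltac:(lra)); specialize (hT2 t ltac:(lra)).
  specialize (hT3 t ltac:(lra)); specialize (hT4 t ltac:(lra)); cbv beta in hT2, hT4.
  replace (d + c + b + a) with (a + b + c + d) in hT2 by ring; fold e in hT1, hT2.
  pose proof (Rmin_l e (Rmin m0 m1)); pose proof (Rmin_r e (Rmin m0 m1));
    pose proof (Rmin_l m0 m1); pose proof (Rmin_r m0 m1).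
  lra.
Qed.

Lemma edge_fields_pos (a b c d theta mu : R) :
  0 < a -> 0 < b -> 0 < c -> 0 < d -> 0 < theta -> 0 < mu <= 1 ->
  - (theta * a + theta ^ 2 * b) < (theta - 1) * (theta + 1) ^ 2 ->
  (theta - 1) * (theta + 1) ^ 2 < theta * c + theta ^ 2 * d ->
  0 < edge_field a b mu (/ (theta + 1)) /\ 0 < edge_field d c mu (1 - / (theta + 1)).
Proof.
  intros ha hb hc hd htheta hmu hlo hhi.
  rewrite edge_field_reflect, !edge_field_at_inv_succ by lra.
  assert (0 < theta * a + theta ^ 2 * b) by nra.
  assert (0 < theta * c + theta ^ 2 * d) by nra.
  (* both numerators are affine in [mu] and positive at [mu = 0] and [mu = 1] *)
  split; apply Rdiv_lt_0_compat; nra.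
Qed.

Theorem lemma13 (a b c d theta : R)
  (ha : 0 < a) (hb : 0 < b) (hc : 0 < c) (hd : 0 < d) (htheta : 0 < theta)
  (hlo : - (theta * a + theta ^ 2 * b) < (theta - 1) * (theta + 1) ^ 2)
  (hhi : (theta - 1) * (theta + 1) ^ 2 < theta * c + theta ^ 2 * d) :
  forall mu : R, 0 < mu <= 1 -> boundary_repelling a b c d theta mu.
Proof.
  intros mu hmu.
  destruct (edge_fields_pos a b c d theta mu) as [hedge0 hedge1]; try assumption.
  assert (hz : 0 < / (theta + 1) < 1).
  { split; [apply Rinv_0_lt_compat; lra | rewrite <- Rinv_1; apply Rinv_lt_contravar; lra]. }
  destruct (eventually_in_inner_square a b c d mu (theta + 1) (/ (theta + 1)))
    as (m & hm & hinner); try (assumption || lra).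
  exists (m / 2); split; [lra|].
  intros x r hsol hx0 hr0.
  destruct (hinner x r (is_solution_solves_system _ _ _ _ _ _ _ _ htheta hsol) hx0 hr0)
    as [T hT].
  exists (m / 2); split; [lra|]; exists T; intros t ht.
  replace (m / 2 + m / 2) with m by field.
  destruct (hT t ht); apply dist_boundary_ge; simpl; tauto.
Qed.
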